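(* In the setting described in the context, let $\varepsilon=\epsilon e$ with $e=(1,\dots,1)\in\mathbb{R}^p$, suppose Algorithm Solve(QVP) with tolerance $\epsilon$ terminates at iteration $K$, and let $\mathcal{L}=\mathcal{N}(\mathcal{Y}_{WN})$ and $\mathcal{U}=\mathcal{N}(V_\varepsilon)=\mathcal{P}^K$. Then (i) $\mathcal{L}\subseteq\mathcal{Y}^{\diamond}\subseteq\mathcal{U}$; (ii) ${\rm WMin}\,\mathcal{Y}^{\diamond}\subseteq\mathcal{U}_\varepsilon\cap\mathcal{Y}^{\diamond}\subseteq\mathcal{Y}^{\diamond}_\varepsilon$; (iii) ${\rm WMin}\,\mathcal{L}\subseteq\mathcal{Y}^{\diamond}_\varepsilon$.
   Context: Setting: $\mathcal{S}\subset\mathbb{R}^n$ nonempty convex compact; $f=(f_1,\dots,f_p):\mathbb{R}^n\to\mathbb{R}^p$ ($p\ge2$), each $f_i$ strictly quasiconvex on $\mathcal{S}$ (continuous and $h(x^1)<h(x^2)\Rightarrow h(\lambda x^1+(1-\lambda)x^2)<h(x^2)$ for $0<\lambda<1$). Vector inequalities are componentwise, $[a,b]=\{z:a\le z\le b\}$, $e^i$ the $i$-th unit vector. $\mathcal{Y}=f(\mathcal{S})$, $\mathcal{Y}^+=\mathcal{Y}+\mathbb{R}^p_+$. $m_i=\min_{x\in\mathcal{S}}f_i(x)$ (assume $m\notin\mathcal{Y}$); $M\in\mathbb{R}^p$ with $M_i\ge\max_{x\in\mathcal{S}}f_i(x)$ (constructed as the max of $f_i$ over the vertices of a simplex containing $\mathcal{S}$).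 $\mathcal{Y}^{\diamond}=\mathcal{Y}^+\cap(M-\mathbb{R}^p_+)$. For $Q\subset\mathbb{R}^p$: ${\rm WMin}\,Q=\{q\in Q:(q-\operatorname{int}\mathbb{R}^p_+)\cap Q=\emptyset\}$ and $Q_\varepsilon=\{q\in Q:(q-\varepsilon-\operatorname{int}\mathbb{R}^p_+)\cap Q=\emptyset\}$. For $Q\subset[m,M]$, the conormal hull is $\mathcal{N}(Q)=(Q+\mathbb{R}^p_+)\cap(M-\mathbb{R}^p_+)$ (the smallest set containing $Q$ such that $[y,M]$ lies in it for each of its points $y$). Fix $\hat d>0$; $(P^2(v))$ is $\min_{x\in\mathcal{S}}\max_j (f_j(x)-v_j)/\hat d_j$. A vertex $v$ of a finite set $V$ is proper if no other $v'\in V$, $v'\ne v$, satisfies $v'\le v$. Algorithm Solve(QVP) with tolerance $\epsilon\ge0$: $V^0=\{m\}$, $V_\varepsilon=\emptyset$, $\mathcal{Y}_{WN}=\emptyset$, $k=0$. While $V^k\setminus V_\varepsilon\ne\emptyset$: choose $v^k\in V^k\setminus V_\varepsilon$, solve $(P^2(v^k))$ with optimal $(x^k,t_k)$, set $w^k=v^k+t_k\hat d$, add $f(x^k)$ to $\mathcal{Y}_{WN}$; if $\|w^k-v^k\|\le\epsilon$, add $v^k$ to $V_\varepsilon$ and repeat the loop (without changing $k$); otherwise set $V^{k+1}=(V^k\setminus\{v^k\})\cup\{v^k+(w^k_i-v^k_i)e^i:i=1,\dots,p\}$, remove improper elements, and increase $k$ by one. $\mathcal{P}^k=\bigcup_{v\in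 V^k}[v,M]$. *)

(* Points of R^k are row vectors 'rV[R]_k,
   the i-th coordinate of y is y ord0 i. *)
From mathcomp Require Import all_boot all_algebra all_classical all_reals all_analysis.
Import GRing.Theory Num.Theory numFieldNormedType.Exports.
Set Implicit Arguments. Unset Strict Implicit. Unset Printing Implicit Defensive.
Local Open Scope ring_scope.
Local Open Scope classical_set_scope.

Section QVP.
Variable R : realType.

Definition vle (p : nat) (a b : 'rV[R]_p) := forall i : 'I_p, a ord0 i <= b ord0 i.
Definition vlt (p : nat) (a b : 'rV[R]_p) := forall i : 'I_p, a ord0 i < b ord0 i.

Definition enorm (p : nat) (a : 'rV[R]_p) := Num.sqrt (\sum_(i < p) (a ord0 i) ^+ 2).

Definition strictly_quasiconvex_on (n : nat) (S : set 'rV[R]_n) (h : 'rV[R]_n -> R) :=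
  {within S, continuous h} /\
  forall x1 x2 (l : R), S x1 -> S x2 -> 0 < l -> l < 1 ->
    h x1 < h x2 -> h (l *: x1 + (1 - l) *: x2) < h x2.

Definition Yplus (n p : nat) (S : set 'rV[R]_n) (f : 'rV[R]_n -> 'rV[R]_p) : set 'rV[R]_p :=
  [set y | exists2 x, S x & vle (f x) y].

Definition Ydiamond (n p : nat) (S : set 'rV[R]_n) (f : 'rV[R]_n -> 'rV[R]_p) (M : 'rV[R]_p) :=
  Yplus S f `&` [set y | vle y M].

Definition WMin (p : nat) (Q : set 'rV[R]_p) : set 'rV[R]_p :=
  [set q | Q q /\ ~ (exists2 q', Q q' & vlt q' q)].

Definition eps_min (p : nat) (eps : 'rV[R]_p) (Q : set 'rV[R]_p) : set 'rV[R]_p :=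
  [set q | Q q /\ ~ (exists2 q', Q q' & vlt q' (q - eps))].

Definition conormal (p : nat) (M : 'rV[R]_p) (Q : set 'rV[R]_p) : set 'rV[R]_p :=
  [set y | (exists2 q, Q q & vle q y) /\ vle y M].

Definition boxes_union (p : nat) (V : set 'rV[R]_p) (M : 'rV[R]_p) : set 'rV[R]_p :=
  [set y | exists2 v, V v & (vle v y /\ vle y M)].

(* (x, t) is an optimal solution of (P^2(v)):
   min t  s.t.  x in S,  f(x) - v <= t * dhat
   (epigraph form of  min_{x in S} max_j (f_j(x) - v_j) / dhat_j, dhat > 0) *)
Definition P2_feasible (n p : nat) (S : set 'rV[R]_n) (f : 'rV[R]_n -> 'rV[R]_p)
  (dhat v : 'rV[R]_p) (x : 'rV[R]_n) (t : R) :=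
  S x /\ forall j : 'I_p, (f x ord0 j - v ord0 j) / dhat ord0 j <= t.

Definition P2_optimal (n p : nat) (S : set 'rV[R]_n) (f : 'rV[R]_n -> 'rV[R]_p)
  (dhat v : 'rV[R]_p) (x : 'rV[R]_n) (t : R) :=
  P2_feasible S f dhat v x t /\
  forall y s, P2_feasible S f dhat v y s -> t <= s.

Record alg_state (p : nat) := AlgState {
  st_V : set 'rV[R]_p;
  st_Veps : set 'rV[R]_p;
  st_YWN : set 'rV[R]_p }.

Definition refine_vertices (p : nat) (V : set 'rV[R]_p) (v w : 'rV[R]_p) : set 'rV[R]_p :=
  let W := (V `\ v) `|`
           range (fun i : 'I_p => v + (w ord0 i - v ord0 i) *: delta_mx ord0 i) in
  [set u | W u /\ forall u', W u' -> vle u' u -> u' = u].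

(* one pass of the while loop; the nat is the iteration counter k *)
Inductive alg_step (n p : nat) (S : set 'rV[R]_n) (f : 'rV[R]_n -> 'rV[R]_p)
    (dhat : 'rV[R]_p) (eps : R) : alg_state p -> nat -> alg_state p -> nat -> Prop :=
| step_eps (s : alg_state p) (k : nat) v x t :
    st_V s v -> ~ st_Veps s v -> P2_optimal S f dhat v x t ->
    enorm ((v + t *: dhat) - v) <= eps ->
    alg_step S f dhat eps s k
      (AlgState (st_V s) (st_Veps s `|` [set v]) (st_YWN s `|` [set f x])) k
| step_refine (s : alg_state p) (k : nat) v x t :
    st_V s v -> ~ st_Veps s v -> P2_optimal S f dhat v x t ->
    eps < enorm ((v + t *: dhat) - v) ->
    alg_step S f dhat eps s k
      (AlgState (refine_vertices (st_V s) v (v + t *: dhat)) (st_Veps s)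
                (st_YWN s `|` [set f x])) k.+1.

Inductive alg_run (n p : nat) (S : set 'rV[R]_n) (f : 'rV[R]_n -> 'rV[R]_p)
    (dhat : 'rV[R]_p) (eps : R) : alg_state p -> nat -> alg_state p -> nat -> Prop :=
| run_refl s k : alg_run S f dhat eps s k s k
| run_step s k s' k' s'' k'' :
    alg_step S f dhat eps s k s' k' -> alg_run S f dhat eps s' k' s'' k'' ->
    alg_run S f dhat eps s k s'' k''.

Definition alg_init (p : nat) (m : 'rV[R]_p) : alg_state p :=
  AlgState [set m] set0 set0.

End QVP.

From mathcomp Require Import all_boot all_algebra all_classical all_reals all_analysis.
From mathcomp Require Import lra.
Import GRing.Theory Num.Theory numFieldNormedType.Exports order.Order.TTheory.
Set Implicit Arguments. Unset Strict Implicit. Unset Printing Implicit Defensive.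
Local Open Scope ring_scope.
Local Open Scope classical_set_scope.

(* The run preserves an invariant: the vertex set V is a finite antichain whose
   upper set contains Y^+, no vertex lies strictly above a point of f(S), V_eps
   is contained in V, and every v in V_eps is certified by an outcome
   f(x) in Y_WN with f(x) <= v + eps.  For an optimal (x, t) of (P^2(v)) no
   point of f(S) is strictly below w = v + t dhat; hence t >= 0, and every point
   of Y^+ above v lies above one of the new vertices v + (w_i - v_i) e^i, so the
   refined vertex set still covers Y^+.  At termination V = V_eps, whence
   U = P^K and Y^diamond <= U.  A point of U strictly below q - eps lies above
   some v in V_eps, whose certificate is then strictly below q: this yields the
   eps-minimality statements. *)

Section VertexSets.
Variables (R : realType) (p : nat).
Implicit Types (a b c e u v w y : 'rV[R]_p) (A B C V W Q : set 'rV[R]_p).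

Lemma vle_refl a : vle a a.
Proof. by move=> i. Qed.

Lemma vle_trans b a c : vle a b -> vle b c -> vle a c.
Proof. by move=> ab bc i; exact: le_trans (ab i) (bc i). Qed.

Lemma vle_anti a b : vle a b -> vle b a -> a = b.
Proof. by move=> ab ba; apply/rowP => i; apply/le_anti; rewrite ab ba. Qed.

Lemma vlt_vle_trans b a c : vlt a b -> vle b c -> vlt a c.
Proof. by move=> ab bc i; exact: lt_le_trans (ab i) (bc i). Qed.

Lemma coord_le_enorm a i : `|a ord0 i| <= enorm a.
Proof.
have sqr_sum_ge0 (P : pred 'I_p) : 0 <= \sum_(j | P j) a ord0 j ^+ 2.
  by apply: sumr_ge0 => j _; exact: sqr_ge0.
rewrite /enorm -sqrtr_sqr ler_sqrt // (bigD1 i) //= lerDl.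
exact: sqr_sum_ge0.
Qed.

Lemma vle_sum_eq a b :
  vle a b -> \sum_i a ord0 i = \sum_i b ord0 i -> a = b.
Proof.
move=> ab sum_ab; apply/rowP => i; apply/esym/eqP; rewrite -subr_eq0; apply/eqP.
apply: (@psumr_eq0P _ _ xpredT (fun j => b ord0 j - a ord0 j)) => // [j _|].
  by rewrite subr_ge0.
by rewrite sumrB sum_ab subrr.
Qed.

Definition antichain V := forall u u', V u -> V u' -> vle u' u -> u' = u.

(* A minimizer of the coordinate sum among the points of W below u is minimal,
   since the coordinate sum is strictly increasing for vle. *)
Lemma finite_set_minimal_below W u : finite_set W -> W u ->
  exists2 u0, (W u0 /\ forall u', W u' -> vle u' u0 -> u' = u0) & vle u0 u.
Proof.
move=> /finite_seqP[s ->] /= su.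
pose below (i : 'I_(size s)) := `[< vle s`_i u >].
have u_idx : (index u s < size s)%N by rewrite index_mem.
have below_u : below (Ordinal u_idx) by apply/asboolP; rewrite /= nth_index.
have [i /asboolP iu i_min] :=
  arg_minP (fun i : 'I_(size s) => \sum_j s`_i ord0 j) below_u.
exists s`_i => //; split; first exact: mem_nth.
move=> u' su' u'i; apply: vle_sum_eq => //; apply/le_anti/andP; split.
  by apply: ler_sum => j _; exact: u'i.
have u'_idx : (index u' s < size s)%N by rewrite index_mem.
have := i_min (Ordinal u'_idx); rewrite /below /= nth_index //; apply.
by apply/asboolP; exact: vle_trans u'i iu.
Qed.

Definition raise_coord v w (i : 'I_p) := v + (w ord0 i - v ord0 i) *: delta_mx ord0 i.

Lemma raise_coordE v w i j :
  raise_coord v w i ord0 j = if i == j then w ord0 j else v ord0 j.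
Proof.
rewrite !mxE eqxx /=; have [->|_] := eqVneq i j.
  by rewrite mulr1 addrC subrK.
by rewrite mulr0 addr0.
Qed.

Lemma vle_raise_coord v w i : vle v w -> vle v (raise_coord v w i).
Proof. by move=> vw j; rewrite raise_coordE; case: eqP => // <-. Qed.

Lemma raise_coord_vle v w i : vle v w -> vle (raise_coord v w i) w.
Proof. by move=> vw j; rewrite raise_coordE; case: eqP. Qed.

Lemma raise_coord_vle_of v w i y :
  vle v y -> w ord0 i <= y ord0 i -> vle (raise_coord v w i) y.
Proof. by move=> vy wy j; rewrite raise_coordE; case: eqP => // <-. Qed.

Definition refine_candidates V v w := (V `\ v) `|` range (raise_coord v w).

Lemma refine_candidates_finite V v w :
  finite_set V -> finite_set (refine_candidates V v w).
Proof.
move=> finV; rewrite /refine_candidates finite_setU; split.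
  exact: finite_setD.
exact/finite_image/finite_finset.
Qed.

Lemma refine_vertices_finite V v w :
  finite_set V -> finite_set (refine_vertices V v w).
Proof.
move=> /(refine_candidates_finite v w); apply: sub_finite_set.
by move=> u [].
Qed.

Lemma refine_vertices_antichain V v w : antichain (refine_vertices V v w).
Proof. by move=> u u' [_ u_min] [Wu' _]; exact: u_min. Qed.

Lemma refine_vertices_keep V v w u : antichain V -> vle v w -> V v ->
  V u -> u <> v -> refine_vertices V v w u.
Proof.
move=> antiV vw Vv Vu uv; split; first by left.
move=> u' [[Vu' _]|[i _ <-]] u'u; first exact: antiV.
by exfalso; apply/uv/esym/antiV => //; exact: vle_trans (vle_raise_coord i vw) u'u.
Qed.

Lemma refine_vertices_cover V v w y : finite_set V ->
  (exists2 u, V u & vle u y) -> (vle v y -> exists i, w ord0 i <= y ord0 i) ->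
  exists2 u0, refine_vertices V v w u0 & vle u0 y.
Proof.
move=> finV [u Vu uy] raise_below_y.
suff [c Wc cy] : exists2 c, refine_candidates V v w c & vle c y.
  have [u0 u0_min u0c] :=
    finite_set_minimal_below (refine_candidates_finite v w finV) Wc.
  by exists u0 => //; exact: vle_trans u0c cy.
have [uv|uv] := pselect (u = v); last by exists u => //; left.
rewrite uv in uy; have [i wy] := raise_below_y uy.
by exists (raise_coord v w i); [right; exists i | exact: raise_coord_vle_of].
Qed.

Lemma conormalE M Q : conormal M Q = boxes_union Q M.
Proof.
apply/seteqP; split=> y /=; first by case=> -[q Qq qy] yM; exists q.
by case=> q Qq [qy yM]; split => //; exists q.
Qed.

Lemma eps_min_subI e A B : A `<=` B -> eps_min e B `&` A `<=` eps_min e A.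
Proof.
by move=> AB q [[_ noB] Aq]; split => // -[q' /AB Bq' q'q]; apply: noB; exists q'.
Qed.

Lemma WMin_sub_eps_min e A B : A `<=` B ->
  (forall q q', B q' -> vlt q' (q - e) -> exists2 c, A c & vlt c q) ->
  WMin A `<=` eps_min e B.
Proof.
move=> AB approx q [Aq noA]; split; first exact: AB.
by move=> [q' Bq' q'q]; apply: noA; exact: approx Bq' q'q.
Qed.

Lemma conormal_approx (eps : R) M Q C q q' :
  (forall u, Q u -> exists2 c, C c & vle c (u + const_mx eps)) ->
  conormal M Q q' -> vlt q' (q - const_mx eps) -> exists2 c, C c & vlt c q.
Proof.
move=> cert [[u Qu uq'] _] q'q; have [c Cc cu] := cert u Qu.
by exists c => // j; have := cu j; have := uq' j; have := q'q j; rewrite !mxE; lra.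
Qed.

End VertexSets.

Section SolveQVP.
Variables (R : realType) (n p : nat) (S : set 'rV[R]_n) (f : 'rV[R]_n -> 'rV[R]_p).
Variables (d : 'rV[R]_p) (eps : R).
Hypothesis p_gt0 : (0 < p)%N.
Hypothesis d_gt0 : vlt 0 d.

Let d_coord_gt0 j : 0 < d ord0 j.
Proof. by have := d_gt0 j; rewrite mxE. Qed.

Lemma conormal_sub_Ydiamond M Q : Q `<=` f @` S -> conormal M Q `<=` Ydiamond S f M.
Proof. by move=> QS y [[q /QS [x Sx <-] fxy] yM]; split => //; exists x. Qed.

Lemma Ydiamond_sub_conormal M Q :
  (forall y, Yplus S f y -> exists2 q, Q q & vle q y) ->
  Ydiamond S f M `<=` conormal M Q.
Proof. by move=> cover y [/cover Qy yM]. Qed.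

Lemma P2_feasible_vle v x t : P2_feasible S f d v x t -> vle (f x) (v + t *: d).
Proof. by move=> [_ feas] j; have := feas j; rewrite ler_pdivrMr // !mxE; lra. Qed.

Lemma P2_feasible_ge0 v x t : P2_feasible S f d v x t -> ~ vlt (f x) v -> 0 <= t.
Proof.
move=> feas not_below; rewrite leNgt; apply/negP => t_lt0; apply: not_below => j.
have := P2_feasible_vle feas j; rewrite !mxE.
have : t * d ord0 j < 0 by rewrite pmulr_llt0.
lra.
Qed.

Lemma P2_optimal_exists_le v x t y : P2_optimal S f d v x t -> S y ->
  exists j, (v + t *: d) ord0 j <= f y ord0 j.
Proof.
move=> [_ t_min] Sy; pose g j := (f y ord0 j - v ord0 j) / d ord0 j.
have [j _ g_max] := arg_maxP g (isT : xpredT (Ordinal p_gt0)).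
exists j; have : t <= g j by apply: (t_min y); split => // k; exact: g_max.
by rewrite ler_pdivlMr // !mxE; lra.
Qed.

Record solve_invariant (s : alg_state R p) : Prop := {
  vertices_finite : finite_set (st_V s);
  vertices_antichain : antichain (st_V s);
  vertices_cover : forall y, Yplus S f y -> exists2 v, st_V s v & vle v y;
  vertices_undominated : forall v x, st_V s v -> S x -> ~ vlt (f x) v;
  certified_sub_vertices : st_Veps s `<=` st_V s;
  outcomes_sub_image : st_YWN s `<=` f @` S;
  certified_approx : forall v, st_Veps s v ->
    exists2 c, st_YWN s c & vle c (v + const_mx eps) }.

Lemma init_invariant m : (forall x, S x -> vle m (f x)) ->
  solve_invariant (alg_init m).
Proof.
move=> m_low; constructor => //=.
- by move=> u u' -> ->.
- by move=> y [x Sx fxy]; exists m => //; exact: vle_trans (m_low x Sx) fxy.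
- by move=> u x -> Sx /(_ (Ordinal p_gt0)); rewrite ltNge m_low.
Qed.

Lemma eps_step_invariant s v x t :
  solve_invariant s -> P2_optimal S f d v x t -> st_V s v ->
  enorm (v + t *: d - v) <= eps ->
  solve_invariant (AlgState (st_V s) (st_Veps s `|` [set v]) (st_YWN s `|` [set f x])).
Proof.
move=> [finV antiV coverV undomV epsV ywnS cert] [feas _] Vv w_near.
rewrite addrC addKr in w_near.
have fx_near : vle (f x) (v + const_mx eps).
  move=> j; have := P2_feasible_vle feas j; have := coord_le_enorm (t *: d) j.
  have := ler_norm (t * d ord0 j); rewrite !mxE; lra.
constructor => //=.
- by move=> u [/epsV | ->].
- by move=> c [/ywnS | ->] //; exists x => //; case: feas.
- move=> u [/cert [c Yc cu] | ->]; first by exists c => //; left.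
  by exists (f x) => //; right.
Qed.

Lemma refine_step_invariant s v x t :
  solve_invariant s -> P2_optimal S f d v x t -> st_V s v -> ~ st_Veps s v ->
  solve_invariant (AlgState (refine_vertices (st_V s) v (v + t *: d)) (st_Veps s)
                            (st_YWN s `|` [set f x])).
Proof.
move=> [finV antiV coverV undomV epsV ywnS cert] opt Vv v_uncertified.
have [[Sx _] _] := opt.
have vw : vle v (v + t *: d).
  have t_ge0 := P2_feasible_ge0 opt.1 (undomV _ _ Vv Sx).
  by move=> j; rewrite !mxE lerDl mulr_ge0 // ltW.
constructor => /=.
- exact: refine_vertices_finite.
- exact: refine_vertices_antichain.
- move=> y Yy; apply: refine_vertices_cover => //; first exact: coverV.
  move=> _; have [y0 Sy0 fy0y] := Yy; have [j wj] := P2_optimal_exists_le opt Sy0.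
  by exists j; exact: le_trans wj (fy0y j).
- move=> u y [[[Vu _]|[i _ <-]] _] Sy; first exact: undomV.
  have [j wj] := P2_optimal_exists_le opt Sy.
  by move=> /vlt_vle_trans /(_ (raise_coord_vle i vw)) /(_ j); rewrite ltNge wj.
- move=> u eps_u; apply: refine_vertices_keep => //; first exact: epsV.
  by move=> uv; apply: v_uncertified; rewrite -uv.
- by move=> c [/ywnS | ->] //; exists x.
- by move=> u /cert [c Yc cu]; exists c => //; left.
Qed.

Lemma run_invariant s k s' k' : alg_run S f d eps s k s' k' ->
  solve_invariant s -> solve_invariant s'.
Proof.
elim=> // {s k s' k'} s0 k0 s1 k1 s2 k2 step _ IH inv0; apply: IH.
case: step inv0 => {s0 k0 s1 k1} s0 k0 v x t Vv v_uncertified opt w_dist inv0.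
  exact: eps_step_invariant inv0 opt Vv w_dist.
exact: refine_step_invariant inv0 opt Vv v_uncertified.
Qed.

End SolveQVP.

Theorem mainTheorem9 (R : realType) (n p : nat) (S : set 'rV[R]_n)
  (f : 'rV[R]_n -> 'rV[R]_p) (m M dhat : 'rV[R]_p) (eps : R)
  (sfin : alg_state R p) (K : nat) :
  (2 <= p)%N ->
  S !=set0 -> convex_set S -> compact S ->
  (forall i : 'I_p, strictly_quasiconvex_on S (fun x => f x ord0 i)) ->
  (* m_i = min_{x in S} f_i(x) *)
  (forall i : 'I_p, (forall x, S x -> m ord0 i <= f x ord0 i) /\
                    (exists2 x, S x & f x ord0 i = m ord0 i)) ->
  ~ (f @` S) m ->
  (* M_i >= max_{x in S} f_i(x) *)
  (forall x, S x -> vle (f x) M) ->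
  vlt 0 dhat ->
  0 <= eps ->
  (* the algorithm, started from V^0 = {m}, k = 0, runs to a state with iteration K ... *)
  alg_run S f dhat eps (alg_init m) 0%N sfin K ->
  (* ... where it terminates: V^K \ V_eps is empty *)
  st_V sfin `\` st_Veps sfin = set0 ->
  let epsv := const_mx eps : 'rV[R]_p in
  let Yd := Ydiamond S f M in
  let L := conormal M (st_YWN sfin) in
  let U := conormal M (st_Veps sfin) in
  U = boxes_union (st_V sfin) M /\
  (L `<=` Yd /\ Yd `<=` U) /\
  (WMin Yd `<=` eps_min epsv U `&` Yd /\ eps_min epsv U `&` Yd `<=` eps_min epsv Yd) /\
  WMin L `<=` eps_min epsv Yd.
Proof.
(* Convexity, compactness, quasiconvexity and m \notin Y only ensure that the
   subproblems (P^2(v)) are solvable. *)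
move=> /ltnW p_gt0 _ _ _ _ m_min _ f_le_M d_gt0 _ run terminated epsv Yd L U.
have m_low x : S x -> vle m (f x) by move=> Sx i; exact: (m_min i).1.
have [_ _ coverV _ epsV ywnS cert] :=
  run_invariant p_gt0 d_gt0 run (init_invariant eps p_gt0 m_low).
have Veps_eq : st_Veps sfin = st_V sfin.
  apply/seteqP; split => // v Vv; apply: contrapT => v_uncertified.
  by have : (st_V sfin `\` st_Veps sfin) v by []; rewrite terminated.
have ywn_L : st_YWN sfin `<=` L.
  move=> c Yc; split; first by exists c => //; exact: vle_refl.
  by have [x Sx <-] := ywnS _ Yc; exact: f_le_M.
have LYd : L `<=` Yd := conormal_sub_Ydiamond ywnS.
have YdU : Yd `<=` U by apply: Ydiamond_sub_conormal; rewrite Veps_eq.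
split; first by rewrite /U conormalE Veps_eq.
split=> //; split; first split.
- move=> q Wq; split; last exact: Wq.1.
  apply: WMin_sub_eps_min Wq => // q0 q' Uq' /(conormal_approx cert Uq') [c Yc cq].
  by exists c => //; exact/LYd/ywn_L.
- exact: eps_min_subI.
- apply: WMin_sub_eps_min => // q q' /YdU Uq' /(conormal_approx cert Uq') [c Yc cq].
  by exists c => //; exact: ywn_L.
Qed.
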